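(* Let $\mathcal{B}$ be a prime Banach algebra over $\mathbb{R}$ or $\mathbb{C}$, and let $\mathcal{H}_1,\mathcal{H}_2$ be non-empty open subsets of $\mathcal{B}$. Suppose $\mathcal{B}$ admits a continuous automorphism $f$ such that for every $(x,y)\in\mathcal{H}_1\times\mathcal{H}_2$ there exist positive integers $p=p(x,y)$, $q=q(x,y)$ with $$f(x^{p}\circ y^{q})+[x^{p},y^{q}]\in Z(\mathcal{B}).$$ Then $\mathcal{B}$ is commutative.
   Context: $Z(\mathcal{B})$ denotes the center of $\mathcal{B}$. For $x,y\in\mathcal{B}$, $x\circ y=xy+yx$ and $[x,y]=xy-yx$. $\mathcal{B}$ is prime if $x\mathcal{B}y=\{0\}$ implies $x=0$ or $y=0$. An automorphism of $\mathcal{B}$ is a bijective map $f:\mathcal{B}\to\mathcal{B}$ with $f(x+y)=f(x)+f(y)$ and $f(xy)=f(x)f(y)$ for all $x,y$. *)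

From HB Require Import structures.
From mathcomp Require Import all_boot all_order all_algebra.
From mathcomp Require Import all_classical all_reals all_analysis.
Set Implicit Arguments. Unset Strict Implicit. Unset Printing Implicit Defensive.
Import Order.TTheory GRing.Theory Num.Theory.
Import numFieldNormedType.Exports.
Local Open Scope classical_set_scope.
Local Open Scope ring_scope.

Definition banach_algebra_mul (R : realType) (B : completeNormedModType R)
    (mul : B -> B -> B) : Prop :=
  [/\ (forall x y z, mul x (mul y z) = mul (mul x y) z),
      (forall (a : R) x y z, mul (a *: x + y) z = a *: mul x z + mul y z),
      (forall (a : R) x y z, mul z (a *: x + y) = a *: mul z x + mul z y)
    & (forall x y, `|mul x y| <= `|x| * `|y|)].

(* positive powers in a possibly non-unital algebra:
   bpow mul x p = x^p for p >= 1 (p = 0 is never used). *)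
Definition bpow (T : Type) (mul : T -> T -> T) (x : T) (p : nat) : T :=
  iter p.-1 (mul x) x.

Definition jordan (T : zmodType) (mul : T -> T -> T) (x y : T) : T :=
  mul x y + mul y x.
Definition lie_comm (T : zmodType) (mul : T -> T -> T) (x y : T) : T :=
  mul x y - mul y x.

Definition alg_center (T : Type) (mul : T -> T -> T) : set T :=
  [set z | forall x, mul z x = mul x z].

Definition prime_alg (T : zmodType) (mul : T -> T -> T) : Prop :=
  forall a b : T, (forall x, mul (mul a x) b = 0) -> a = 0 \/ b = 0.

Definition automorphism (T : zmodType) (mul : T -> T -> T) (f : T -> T) : Prop :=
  [/\ bijective f, (forall x y, f (x + y) = f x + f y)
    & (forall x y, f (mul x y) = mul (f x) (f y))].

Definition commutative_alg (T : Type) (mul : T -> T -> T) : Prop :=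
  forall x y, mul x y = mul y x.

From HB Require Import structures.
From mathcomp Require Import all_boot all_order all_algebra.
From mathcomp Require Import all_classical all_reals all_analysis.
From mathcomp Require Import ssrAC lra.
Import Order.TTheory GRing.Theory Num.Theory.
Import numFieldNormedType.Exports.
Local Open Scope classical_set_scope.
Local Open Scope ring_scope.
Set Implicit Arguments. Unset Strict Implicit. Unset Printing Implicit Defensive.

(* Baire's theorem, applied to the closed sets of pairs (x, y) on which a
   fixed pair of exponents (p, q) works, yields one pair (p, q) that works
   on a whole ball. Along an affine line t |-> (x0 + t (x - x0), y0 + t (y - y0))
   the expression f(x^p o y^q) + [x^p, y^q] is a polynomial in t at the
   points t = 1/(k+1) (f is additive), so its commutators vanish everywhere
   as soon as they vanish near t = 0. Taking x = y, f(2 x^n) and hence x^n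
   with n = p + q is central for every x. In a prime algebra this forces
   commutativity: if some c = x^n is nonzero, the coefficient of t in
   (c + t w)^n is n c^(n-1) w, which is then central, and the central,
   nonzero c^(n-1) cancels from c^(n-1) [w, z] = 0; if all n-th powers
   vanish, primeness lowers the nilpotency index down to 1. *)

Section BilinearProduct.
Variables (R : realType) (B : normedModType R) (m : B -> B -> B).
Hypothesis massoc : forall x y z, m x (m y z) = m (m x y) z.
Hypothesis mlinl : forall (a : R) x y z, m (a *: x + y) z = a *: m x z + m y z.
Hypothesis mlinr : forall (a : R) x y z, m z (a *: x + y) = a *: m z x + m z y.

Local Notation central := (alg_center m).

Lemma m0l z : m 0 z = 0.
Proof. by have := mlinl (-1) z z z; rewrite scaleN1r addNr scaleN1r addNr. Qed.

Lemma m0r z : m z 0 = 0.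
Proof. by have := mlinr (-1) z z z; rewrite scaleN1r addNr scaleN1r addNr. Qed.

Lemma mDl x y z : m (x + y) z = m x z + m y z.
Proof. by have := mlinl 1 x y z; rewrite !scale1r. Qed.

Lemma mDr x y z : m z (x + y) = m z x + m z y.
Proof. by have := mlinr 1 x y z; rewrite !scale1r. Qed.

Lemma mZl (a : R) x z : m (a *: x) z = a *: m x z.
Proof. by have := mlinl a x 0 z; rewrite !addr0 m0l addr0. Qed.

Lemma mZr (a : R) x z : m z (a *: x) = a *: m z x.
Proof. by have := mlinr a x 0 z; rewrite !addr0 m0r addr0. Qed.

Lemma mNl x z : m (- x) z = - m x z.
Proof. by rewrite -scaleN1r mZl scaleN1r. Qed.

Lemma mNr x z : m z (- x) = - m z x.
Proof. by rewrite -scaleN1r mZr scaleN1r. Qed.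

Lemma mBl x y z : m (x - y) z = m x z - m y z.
Proof. by rewrite mDl mNl. Qed.

Lemma mBr x y z : m z (x - y) = m z x - m z y.
Proof. by rewrite mDr mNr. Qed.

Lemma bpowS x k : bpow m x k.+2 = m x (bpow m x k.+1).
Proof. by []. Qed.

Lemma bpowSr x k : bpow m x k.+2 = m (bpow m x k.+1) x.
Proof. by elim: k => [//|k IH]; rewrite [in LHS]bpowS [in LHS]IH massoc. Qed.

Lemma mul_bpow x i j : m (bpow m x i.+1) (bpow m x j.+1) = bpow m x (i + j).+2.
Proof. by elim: i => [//|i IH]; rewrite bpowS -massoc IH. Qed.

(* The automorphism is only additive, hence commutes with scalars only at
   rational points: polynomial identities in a real parameter [t] are
   therefore only required at the points [1/(k+1)], which accumulate at 0. *)
Definition harmonic (t : R) := exists k : nat, t = k.+1%:R^-1.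

Definition hpoly_size N (g : R -> B) :=
  exists c : nat -> B, forall t, harmonic t -> g t = \sum_(j < N) t ^+ j *: c j.

Definition hpoly (g : R -> B) := exists N, hpoly_size N g.

Lemma invS_gt0 k : 0 < k.+1%:R^-1 :> R.
Proof. by rewrite invr_gt0 ltr0n. Qed.

Lemma invS_le1 k : k.+1%:R^-1 <= 1 :> R.
Proof. by rewrite invr_le1 ?ler1n ?unitfE ?pnatr_eq0 ?ltr0n. Qed.

Lemma norm_le_invS_eq0 (v : B) (M : R) K :
  (forall k, (K <= k)%N -> `|v| <= k.+1%:R^-1 * M) -> v = 0.
Proof.
move=> small; apply/eqP; apply: contraT => v0.
have v_gt0 : 0 < `|v| by rewrite normr_gt0.
have M_gt0 : 0 < M.
  by have := lt_le_trans v_gt0 (small K (leqnn _)); rewrite pmulr_rgt0 ?invS_gt0.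
set n := Num.truncn (M / `|v|).
have lt_n : M / `|v| < (K + n).+1%:R.
  by apply: (lt_le_trans (truncnS_gt _)); rewrite ler_nat ltnS leq_addl.
have := small (K + n)%N (leq_addr _ _).
rewrite mulrC ler_pdivlMr ?ltr0n // => le_n.
by rewrite ltr_pdivrMr // mulrC ltNge le_n in lt_n.
Qed.

Lemma norm_poly_le N (c : nat -> B) t : 0 <= t <= 1 ->
  `|\sum_(j < N) t ^+ j *: c j| <= \sum_(j < N) `|c j|.
Proof.
move=> /andP[t0 t1]; apply: (le_trans (ler_norm_sum _ _ _)); apply: ler_sum => i _.
by rewrite normrZ ger0_norm ?exprn_ge0 // ler_piMl ?exprn_ile1.
Qed.

Lemma poly_coef_eq0 N (c : nat -> B) K :
  (forall k, (K <= k)%N -> \sum_(j < N) k.+1%:R^-1 ^+ j *: c j = 0) ->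
  forall j, (j < N)%N -> c j = 0.
Proof.
elim: N c => [//|N IH] c vanish.
have sumS s : \sum_(j < N.+1) s ^+ j *: c j
    = c 0%N + s *: \sum_(j < N) s ^+ j *: c j.+1.
  rewrite big_ord_recl expr0 scale1r scaler_sumr; congr (_ + _).
  by apply: eq_bigr => i _; rewrite scalerA exprS.
have c0 : c 0%N = 0.
  apply: (@norm_le_invS_eq0 _ (\sum_(j < N) `|c j.+1|) K) => k Kk.
  move: (vanish k Kk); rewrite sumS => /eqP; rewrite addr_eq0 => /eqP ->.
  rewrite normrN normrZ ger0_norm ?(ltW (invS_gt0 _)) //.
  apply: ler_wpM2l; first exact: ltW (invS_gt0 _).
  by apply: (@norm_poly_le N (fun j => c j.+1)); rewrite (ltW (invS_gt0 _)) invS_le1.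
case=> [//|j] ltjN; apply: (IH (fun j => c j.+1)) => // k Kk.
move: (vanish k Kk); rewrite sumS c0 add0r => /eqP.
by rewrite scaler_eq0 (gt_eqF (invS_gt0 _)) => /eqP.
Qed.

Lemma hpoly_size_ext N g g' :
  hpoly_size N g -> (forall t, harmonic t -> g t = g' t) -> hpoly_size N g'.
Proof. by move=> [c Hc] gg'; exists c => t ht; rewrite -gg' // Hc. Qed.

Lemma hpoly_size_widen N N' g : (N <= N')%N -> hpoly_size N g -> hpoly_size N' g.
Proof.
move=> leNN' [c Hc]; exists (fun j => if (j < N)%N then c j else 0) => t ht.
rewrite Hc // (big_ord_widen N' (fun j => t ^+ j *: c j) leNN') big_mkcond /=.
by apply: eq_bigr => i _; case: ifP => _; rewrite ?scaler0.
Qed.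

Lemma hpoly_size_add N g h :
  hpoly_size N g -> hpoly_size N h -> hpoly_size N (fun t => g t + h t).
Proof.
move=> [c Hc] [d Hd]; exists (fun j => c j + d j) => t ht.
by rewrite Hc // Hd // -big_split; apply: eq_bigr => i _; rewrite scalerDr.
Qed.

Lemma hpoly_size_shift N g : hpoly_size N g -> hpoly_size N.+1 (fun t => t *: g t).
Proof.
move=> [c Hc]; exists (fun j => if j is j'.+1 then c j' else 0) => t ht.
rewrite Hc // big_ord_recl /= scaler0 add0r scaler_sumr.
by apply: eq_bigr => i _; rewrite scalerA exprS.
Qed.

Lemma hpoly_size_additive (L : B -> B) N g :
  {morph L : x y / x + y} ->
  (forall t j v, harmonic t -> L (t ^+ j *: v) = t ^+ j *: L v) ->
  hpoly_size N g -> hpoly_size N (fun t => L (g t)).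
Proof.
move=> Ladd LZ [c Hc]; exists (fun j => L (c j)) => t ht.
have L0 : L 0 = 0 by apply/(addrI (L 0)); rewrite -Ladd !addr0.
by rewrite Hc // (big_morph L Ladd L0); apply: eq_bigr => i _; apply: LZ.
Qed.

Lemma hpoly_size_mul N M g h : hpoly_size N g -> hpoly_size M h ->
  hpoly_size (N + M) (fun t => m (g t) (h t)).
Proof.
elim: N g => [|N IH] g [c Hc] hh.
  exists (fun _ => 0) => t ht; rewrite Hc // big_ord0 m0l.
  by rewrite big1 // => i _; rewrite scaler0.
have tail : hpoly_size N (fun t => \sum_(j < N) t ^+ j *: c j.+1).
  by exists (fun j => c j.+1).
have head : hpoly_size (N.+1 + M) (fun t => m (c 0%N) (h t)).
  apply: hpoly_size_widen (leq_addl _ _) _.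
  by apply: (hpoly_size_additive (fun x y => mDr x y _)) hh => t j v _; rewrite mZr.
have := hpoly_size_add head (hpoly_size_shift (IH _ tail hh)).
move/hpoly_size_ext; apply => t ht.
rewrite Hc // big_ord_recl /= expr0 scale1r mDl -mZl scaler_sumr.
by congr (_ + m _ _); apply: eq_bigr => i _; rewrite scalerA exprS.
Qed.

Lemma hpoly_cst a : hpoly (fun _ => a).
Proof. by exists 1%N, (fun _ => a) => t _; rewrite big_ord1 expr0 scale1r. Qed.

Lemma hpolyD g h : hpoly g -> hpoly h -> hpoly (fun t => g t + h t).
Proof.
move=> [N hg] [M hh]; exists (maxn N M).
by apply: hpoly_size_add; apply: hpoly_size_widen; [exact: leq_maxl|exact: hg|
  exact: leq_maxr|exact: hh].
Qed.

Lemma hpoly_shift g : hpoly g -> hpoly (fun t => t *: g t).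
Proof. by move=> [N hg]; exists N.+1; apply: hpoly_size_shift. Qed.

Lemma hpoly_affine a g : hpoly g -> hpoly (fun t => a + t *: g t).
Proof. by move=> hg; apply: hpolyD (hpoly_cst a) (hpoly_shift hg). Qed.

Lemma hpoly_line a b : hpoly (fun t => a + t *: b).
Proof. exact: hpoly_affine (hpoly_cst b). Qed.

Lemma hpoly_additive (L : B -> B) g :
  {morph L : x y / x + y} ->
  (forall t j v, harmonic t -> L (t ^+ j *: v) = t ^+ j *: L v) ->
  hpoly g -> hpoly (fun t => L (g t)).
Proof. by move=> Ladd LZ [N hg]; exists N; apply: hpoly_size_additive. Qed.

Lemma hpolyB g h : hpoly g -> hpoly h -> hpoly (fun t => g t - h t).
Proof.
move=> hg hh; apply: hpolyD hg _.
by apply: hpoly_additive hh => [x y|t j v _]; rewrite ?opprD ?scalerN.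
Qed.

Lemma hpolyM g h : hpoly g -> hpoly h -> hpoly (fun t => m (g t) (h t)).
Proof. by move=> [N hg] [M hh]; exists (N + M)%N; apply: hpoly_size_mul. Qed.

Lemma hpoly_bpow g k : hpoly g -> hpoly (fun t => bpow m (g t) k.+1).
Proof. by move=> hg; elim: k => [//|k IH]; apply: hpolyM. Qed.

Lemma hpoly_eq0_at1 g K : hpoly g ->
  (forall k, (K <= k)%N -> g k.+1%:R^-1 = 0) -> g 1 = 0.
Proof.
move=> [N [c Hc]] vanish.
have coef0 := @poly_coef_eq0 N c K.
rewrite Hc; last by exists 0%N; rewrite invr1.
rewrite big1 // => j _; rewrite coef0 ?scaler0 // => k Kk.
by rewrite -Hc ?vanish //; exists k.
Qed.

Definition taylor1 (g : R -> B) a b :=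
  exists2 r, hpoly r & forall t, g t = a + t *: (b + t *: r t).

Lemma taylor1_line a b : taylor1 (fun t => a + t *: b) a b.
Proof. by exists (fun _ => 0) => [|t]; rewrite ?scaler0 ?addr0 //; apply: hpoly_cst. Qed.

Lemma taylor1_cst a : taylor1 (fun _ => a) a 0.
Proof. by have := taylor1_line a 0; under eq_fun do rewrite scaler0 addr0. Qed.

Lemma taylor1_sub g h a b a' b' : taylor1 g a b -> taylor1 h a' b' ->
  taylor1 (fun t => g t - h t) (a - a') (b - b').
Proof.
move=> [r hr Hg] [r' hr' Hh]; exists (fun t => r t - r' t); first exact: hpolyB.
move=> t; rewrite Hg Hh !scalerDr !scalerN !opprD !addrA.
by rewrite [LHS](ACl ((1*4)*(2*5)*(3*6)))%AC /= !addrA.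
Qed.

Lemma taylor1_mul g h a b a' b' : taylor1 g a b -> taylor1 h a' b' ->
  taylor1 (fun t => m (g t) (h t)) (m a a') (m a b' + m b a').
Proof.
move=> [r hr Hg] [r' hr' Hh].
exists (fun t => m a (r' t) + m (r t) a' + m (b + t *: r t) (b' + t *: r' t)).
  apply: hpolyD; first by apply: hpolyD; apply: hpolyM => //; apply: hpoly_cst.
  by apply: hpolyM; apply: hpoly_affine.
move=> t.
have Ea : m a (h t) = m a a' + t *: (m a b' + t *: m a (r' t)).
  by rewrite Hh mDr mZr mDr mZr.
have Eb : m (b + t *: r t) (h t) =
    m b a' + t *: m (r t) a' + t *: m (b + t *: r t) (b' + t *: r' t).
  by rewrite [in LHS]Hh mDr mZr mDl mZl.
rewrite Hg mDl mZl Ea Eb !scalerDr !addrA.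
by rewrite [LHS](ACl (1*2*4*3*5*6))%AC.
Qed.

Lemma taylor1_commr g a b z : taylor1 g a b ->
  taylor1 (fun t => m (g t) z - m z (g t)) (m a z - m z a) (m b z - m z b).
Proof.
move=> ha; have := taylor1_sub (taylor1_mul ha (taylor1_cst z))
  (taylor1_mul (taylor1_cst z) ha).
by rewrite m0r m0l add0r addr0.
Qed.

Fixpoint dpow a b k :=
  if k is k'.+1 then m a (dpow a b k') + m b (bpow m a k'.+1) else b.

Lemma taylor1_bpow g a b k : taylor1 g a b ->
  taylor1 (fun t => bpow m (g t) k.+1) (bpow m a k.+1) (dpow a b k).
Proof. by move=> ha; elim: k => [//|k IH]; apply: taylor1_mul. Qed.

Lemma taylor1_eq0 g a b : taylor1 g a b -> (forall t, g t = 0) -> b = 0.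
Proof.
move=> [r [N [c Hc]] Hg] g0.
have a0 : a = 0 by rewrite -(g0 0) Hg scale0r addr0.
pose d j := if j is j'.+1 then c j' else b.
apply: (@poly_coef_eq0 N.+1 d 0%N _ 0%N (ltn0Sn N)) => k _.
set t := k.+1%:R^-1.
have : t *: (b + t *: r t) = 0 by rewrite -(g0 t) Hg a0 add0r.
rewrite Hc; last by exists k.
move=> /eqP; rewrite scaler_eq0 (gt_eqF (invS_gt0 _)) /= => /eqP /(etrans _).
apply; rewrite big_ord_recl expr0 scale1r scaler_sumr; congr (_ + _).
by apply: eq_bigr => i _; rewrite scalerA exprS.
Qed.

Hypothesis mprime : prime_alg m.

Lemma central_mul_eq0 c v : central c -> c != 0 -> m c v = 0 -> v = 0.
Proof.
move=> cc c0 cv; have [/eqP|//] : c = 0 \/ v = 0.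
  by apply: mprime => x; rewrite cc -massoc cv m0r.
by rewrite (negPf c0).
Qed.

Lemma central_bpow c k : central c -> central (bpow m c k.+1).
Proof.
by move=> cc; elim: k => [//|k IH] x; rewrite bpowS -massoc IH massoc cc -massoc.
Qed.

Lemma bpow_central_neq0 c k : central c -> c != 0 -> bpow m c k.+1 != 0.
Proof.
move=> cc c0; elim: k => [//|k IH]; apply/eqP.
by rewrite bpowS => /(central_mul_eq0 cc c0) /eqP; rewrite (negPf IH).
Qed.

Lemma dpow_central c w k : central c ->
  dpow c w k.+1 = k.+2%:R *: m (bpow m c k.+1) w.
Proof.
move=> cc; elim: k => [|k IH]; first by rewrite /= -(cc w) scaler_nat mulr2n.
have -> : dpow c w k.+2 = m c (dpow c w k.+1) + m w (bpow m c k.+2) by [].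
rewrite IH mZr massoc -bpowS -(central_bpow k.+1 cc w).
by rewrite -{2}[m _ w]scale1r -scalerDl natr1.
Qed.

Lemma commutative_of_central_bpow_neq0 c k : central c -> c != 0 ->
  (forall x, central (bpow m x k.+2)) -> commutative_alg m.
Proof.
move=> cc c0 central_pow w z.
set e := bpow m c k.+1.
have ce : central e by apply: central_bpow.
have e0 : e != 0 by apply: bpow_central_neq0.
have ewz : m (m e w) z = m z (m e w).
  have := taylor1_eq0 (taylor1_commr z (taylor1_bpow k.+1 (taylor1_line c w))).
  rewrite dpow_central // mZl mZr -scalerBr => /(_ _)/eqP.
  rewrite scaler_eq0 pnatr_eq0 subr_eq0 => /(_ _)/eqP; apply => t.
  by rewrite central_pow subrr.
apply/eqP; rewrite -subr_eq0; apply/eqP; apply: (central_mul_eq0 ce e0).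
by rewrite mBr !massoc ewz massoc -(ce z) subrr.
Qed.

(* Since [x^(k+2) = 0], left multiplication by [x^(k+1)] turns the
   coefficient of [t] in [(x + t y)^(k+2)] into [x^(k+1) y x^(k+1)]. *)
Lemma bpow_eq0_pred k :
  (forall x, bpow m x k.+2 = 0) -> forall x, bpow m x k.+1 = 0.
Proof.
move=> nil x; have [] // := mprime (a := bpow m x k.+1) (b := bpow m x k.+1).
move=> y; have := taylor1_eq0 (taylor1_bpow k.+1 (taylor1_line x y)) (fun t => nil _).
move=> /= /(congr1 (m (bpow m x k.+1))).
by rewrite m0r mDr massoc -bpowSr nil m0l add0r massoc.
Qed.

Lemma commutative_of_central_bpow k :
  (forall x, central (bpow m x k.+2)) -> commutative_alg m.
Proof.
move=> central_pow.
have [[x x0]|all0] := pselect (exists x, bpow m x k.+2 != 0).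
  exact: (commutative_of_central_bpow_neq0 (central_pow x) x0).
have nil x : bpow m x k.+2 = 0.
  by apply/eqP/contraT => x0; case: all0; exists x.
have nil_trivial n : (forall x, bpow m x n.+1 = 0) -> forall x : B, x = 0.
  by elim: n => [nil0 x|n IH nil_n]; [by have := nil0 x|apply/IH/bpow_eq0_pred].
by move=> x y; rewrite (nil_trivial _ nil x) (nil_trivial _ nil y).
Qed.


Definition twisted (f : B -> B) p q x y :=
  f (jordan m (bpow m x p.+1) (bpow m y q.+1))
  + lie_comm m (bpow m x p.+1) (bpow m y q.+1).

Lemma twisted_diag f p q x :
  twisted f p q x x = f (bpow m x (p + q).+2 + bpow m x (p + q).+2).
Proof.
by rewrite /twisted /jordan /lie_comm !mul_bpow [(q + p)%N]addnC subrr addr0.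
Qed.

Lemma additive_scale_harmonic (f : B -> B) : {morph f : x y / x + y} ->
  forall t j v, harmonic t -> f (t ^+ j *: v) = t ^+ j *: f v.
Proof.
move=> fD t j v [n ->].
have f0 : f 0 = 0 by apply/(addrI (f 0)); rewrite -fD !addr0.
have fMn w k : f (w *+ k) = f w *+ k.
  by elim: k => [|k IH]; rewrite ?mulr0n // !mulrS fD IH.
rewrite exprVn -natrX; set s := (n.+1 ^ j)%N.
have s0 : s%:R != 0 :> R by rewrite pnatr_eq0 expn_eq0.
have -> : f v = f (s%:R^-1 *: v) *+ s.
  by rewrite -fMn -[_ *+ s]scaler_nat scalerKV.
by rewrite -[f _ *+ s]scaler_nat scalerK.
Qed.

Lemma hpoly_twisted f p q X Y : {morph f : x y / x + y} ->
  hpoly X -> hpoly Y -> hpoly (fun t => twisted f p q (X t) (Y t)).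
Proof.
move=> fD hX hY; have hXp := hpoly_bpow p hX; have hYq := hpoly_bpow q hY.
apply: hpolyD; last by apply: hpolyB; apply: hpolyM.
apply: (hpoly_additive fD (additive_scale_harmonic fD)).
by apply: hpolyD; apply: hpolyM.
Qed.

Lemma invS_mul_lt_eventually (S r : R) : 0 < r ->
  exists K, forall k, (K <= k)%N -> k.+1%:R^-1 * S < r.
Proof.
move=> r0; exists (Num.truncn (S / r)) => k Kk.
have lt_k : S / r < k.+1%:R.
  by apply: (lt_le_trans (truncnS_gt _)); rewrite ler_nat ltnS.
by rewrite mulrC ltr_pdivrMr ?ltr0n // mulrC -ltr_pdivrMr.
Qed.

Lemma central_of_central_near (F : B -> B -> B) x0 y0 r : 0 < r ->
  (forall x y, hpoly (fun t => F (x0 + t *: (x - x0)) (y0 + t *: (y - y0)))) ->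
  (forall x y, `|x - x0| < r -> `|y - y0| < r -> central (F x y)) ->
  forall x y, central (F x y).
Proof.
move=> r0 hF near x y z.
pose Fxy t := F (x0 + t *: (x - x0)) (y0 + t *: (y - y0)).
pose g t := m (Fxy t) z - m z (Fxy t).
have hg : hpoly g.
  by have hz := hpoly_cst z; have hFxy := hF x y; apply: hpolyB; apply: hpolyM.
set S := `|x - x0| + `|y - y0|.
have [K small] := invS_mul_lt_eventually S r0.
have : g 1 = 0.
  apply: (hpoly_eq0_at1 (K := K) hg) => k Kk.
  have close a a0 : `|a - a0| <= S -> `|a0 + k.+1%:R^-1 *: (a - a0) - a0| < r.
    move=> le_aS; rewrite addrAC subrr add0r normrZ ger0_norm ?(ltW (invS_gt0 _)) //.
    exact: le_lt_trans (ler_wpM2l (ltW (invS_gt0 _)) le_aS) (small k Kk).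
  by rewrite /g /Fxy near ?subrr // close // ?lerDl ?lerDr.
rewrite /g /Fxy !scale1r !(addrC x0) !(addrC y0) !subrK.
by move/eqP; rewrite subr_eq0 => /eqP.
Qed.

Lemma central_of_double u : central (u + u) -> central u.
Proof.
move=> cuu x; apply/eqP; rewrite -subr_eq0.
have : 2%:R *: (m u x - m x u) = 0.
  by rewrite scaler_nat mulr2n addrACA -opprD -mDl -mDr cuu subrr.
by move/eqP; rewrite scaler_eq0 pnatr_eq0.
Qed.

Lemma central_of_automorphism f u : automorphism m f -> central (f u) -> central u.
Proof. by move=> [fbij _ fM] cfu x; apply: (bij_inj fbij); rewrite !fM cfu. Qed.

Hypothesis mnorm : forall x y, `|m x y| <= `|x| * `|y|.

Lemma mulm_continuous : continuous (fun xy : B * B => m xy.1 xy.2).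
Proof.
move=> [a b]; apply/cvg_ballP => e e0.
pose D := 2 * (`|a| + `|b| + 1).
have D0 : 0 < D by rewrite mulr_gt0 // ltr_wpDl ?addr_ge0.
pose d := Num.min 1 (e / D).
have d0 : 0 < d by rewrite lt_min ltr01 divr_gt0.
have d1 : d <= 1 by rewrite ge_min lexx.
have dD : d * D <= e by rewrite -ler_pdivlMr // ge_min lexx orbT.
exists (ball a d, ball b d); first by split; apply: nbhsx_ballx.
move=> [x y] [/= ax by_]; rewrite -ball_normE /= in ax by_ *.
have -> : m a b - m x y = m (a - x) b + m x (b - y) by rewrite mBl mBr addrA subrK.
have x_le : `|x| <= `|a| + 1.
  have -> : x = a - (a - x) by rewrite opprB addrC subrK.
  by apply: (le_trans (ler_normB _ _)); rewrite lerD2l (le_trans (ltW ax)).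
apply: (le_lt_trans (ler_normD _ _)).
apply: (@le_lt_trans _ _ (d * `|b| + (`|a| + 1) * d)).
  apply: lerD; apply: (le_trans (mnorm _ _)).
    by apply: ler_wpM2r => //; apply: ltW.
  by apply: ler_pM => //; apply: ltW.
have := normr_ge0 a; have := normr_ge0 b; rewrite /D in dD; nra.
Qed.

Lemma continuous_mulm (T : topologicalType) (g h : T -> B) :
  continuous g -> continuous h -> continuous (fun t => m (g t) (h t)).
Proof.
move=> cg ch t; apply: (@continuous_comp _ _ _ (fun t => (g t, h t))
  (fun xy : B * B => m xy.1 xy.2)); last exact: mulm_continuous.
exact: cvg_pair (cg t) (ch t).
Qed.

Lemma continuous_bpow (T : topologicalType) (g : T -> B) k :
  continuous g -> continuous (fun t => bpow m (g t) k.+1).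
Proof. by move=> cg; elim: k => [//|k IH]; apply: continuous_mulm. Qed.

Lemma continuous_twisted f p q : continuous f ->
  continuous (fun xy : B * B => twisted f p q xy.1 xy.2).
Proof.
move=> cf.
have cfst : continuous (fun xy : B * B => xy.1) by move=> [a b]; apply: cvg_fst.
have csnd : continuous (fun xy : B * B => xy.2) by move=> [a b]; apply: cvg_snd.
have cxp := continuous_bpow (k := p) cfst; have cyq := continuous_bpow (k := q) csnd.
have cxy := continuous_mulm cxp cyq; have cyx := continuous_mulm cyq cxp.
move=> xy; apply: cvgD; last exact: cvgB (cxy xy) (cyx xy).
by apply: continuous_comp; [exact: cvgD (cxy xy) (cyx xy)|exact: cf].
Qed.

Lemma closed_central (T : topologicalType) (F : T -> B) :
  continuous F -> closed [set t | central (F t)].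
Proof.
move=> cF.
have -> : [set t | central (F t)] =
    \bigcap_(z in setT) ((fun t => `|m (F t) z - m z (F t)|) @^-1` [set 0]).
  apply/seteqP; split=> [t ct z _|t ct z] /=; first by rewrite ct subrr normr0.
  by apply/eqP; rewrite -subr_eq0 -normr_eq0; apply/eqP; apply: ct.
apply: closed_bigI => z _; apply: preimage_closed; last exact: closed_eq.
move=> t _; have cz : continuous (fun _ : T => z) by move=> ?; apply: cvg_cst.
apply: (@continuous_comp _ _ _ (fun t => m (F t) z - m z (F t)) Num.norm).
  by apply: cvgB; [apply: (continuous_mulm cF cz)|apply: (continuous_mulm cz cF)].
exact: norm_continuous.
Qed.

End BilinearProduct.


HB.instance Definition _ (R : realType) (U V : completeNormedModType R) :=
  isPointed.Build (U * V)%type (0, 0).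

Lemma prod_complete (R : realType) (U V : completeNormedModType R)
    (F : set_system (U * V)%type) :
  ProperFilter F -> cauchy F -> cvg F.
Proof.
move=> FF Fcauchy.
have Fc := proj1 (@cauchyP R [the pseudoMetricType R of (U * V)%type] F FF) Fcauchy.
have c1 : cauchy (fst @ F).
  apply: cauchy_exP => e e0; have [[x1 x2] Fx] := Fc e e0; exists x1.
  suff : F (fst @^-1` ball x1 e) by [].
  by apply: (filterS _ Fx) => -[y1 y2] [].
have c2 : cauchy (snd @ F).
  apply: cauchy_exP => e e0; have [[x1 x2] Fx] := Fc e e0; exists x2.
  suff : F (snd @^-1` ball x2 e) by [].
  by apply: (filterS _ Fx) => -[y1 y2] [].
have /cvg_ex [l1 F1] : cvg (fst @ F) by apply: cauchy_cvg.
have /cvg_ex [l2 F2] : cvg (snd @ F) by apply: cauchy_cvg.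
apply/cvg_ex; exists (l1, l2).
have Fid : (fun xy : U * V => (xy.1, xy.2)) = id by apply: funext => -[].
by have := cvg_pair F1 F2; rewrite Fid => /(_ _ _ _) F12 A /F12.
Qed.

HB.instance Definition _ (R : realType) (U V : completeNormedModType R) :=
  Uniform_isComplete.Build (U * V)%type (@prod_complete R U V).

Lemma baire_cover_nat (R : realType) (W : completeNormedModType R)
    (O : set W) (C : nat -> set W) :
  open O -> O !=set0 -> (forall i, closed (C i)) -> O `<=` \bigcup_i C i ->
  exists i x (r : R), 0 < r /\ ball x r `<=` O `&` C i.
Proof.
move=> oO [w0 Ow0] cC cover; apply: contrapT => no_ball.
have dense_compl i : open (~` (C i `&` closure O)) /\ dense (~` (C i `&` closure O)).
  split; first exact: closed_openC (closedI (cC i) (@closed_closure _ O)).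
  move=> G [g Gg] oG; apply: contrapT => GC.
  have sub : G `<=` C i `&` closure O.
    by move=> y Gy; apply: contrapT => nCy; apply: GC; exists y.
  have [y [Oy Gy]] : (O `&` G) !=set0.
    by apply: (proj2 (sub g Gg)); apply: open_nbhs_nbhs; split.
  have /nbhs_ballP [e e0 He] : nbhs y (G `&` O).
    by apply: open_nbhs_nbhs; split; [exact: openI|].
  apply: no_ball; exists i, y, e; split => // z /He [Gz Oz]; split => //.
  exact: (proj1 (sub z Gz)).
have [x [Ox notC]] := Baire dense_compl (ex_intro _ w0 Ow0) oO.
have [i _ Cix] := cover x Ox.
by apply: (notC i I); split; [exact: Cix|exact: subset_closure].
Qed.

Lemma baire_cover (R : realType) (W : completeNormedModType R) (I : countType)
    (O : set W) (C : I -> set W) :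
  open O -> O !=set0 -> (forall i, closed (C i)) -> O `<=` \bigcup_i C i ->
  exists i x (r : R), 0 < r /\ ball x r `<=` O `&` C i.
Proof.
move=> oO O0 cC cover.
pose Cn n := if unpickle n is Some i then C i else set0.
have cCn n : closed (Cn n) by rewrite /Cn; case: unpickle => [i|]; [exact: cC|exact: closed0].
have covern : O `<=` \bigcup_n Cn n.
  by move=> x /cover [i _ Cix]; exists (pickle i); rewrite // /Cn pickleK.
have [n [x [r [r0 ballOC]]]] := baire_cover_nat oO O0 cCn covern.
move: ballOC; rewrite /Cn; case: unpickle => [i|] ballOC; first by exists i, x, r.
by have [] := ballOC x (ballxx _ r0).
Qed.

Lemma twisted_central_on_ball (R : realType) (B : completeNormedModType R)
    (m : B -> B -> B) (f : B -> B) (H1 H2 : set B) :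
  (forall (a : R) x y z, m (a *: x + y) z = a *: m x z + m y z) ->
  (forall (a : R) x y z, m z (a *: x + y) = a *: m z x + m z y) ->
  (forall x y, `|m x y| <= `|x| * `|y|) -> continuous f ->
  open H1 -> H1 !=set0 -> open H2 -> H2 !=set0 ->
  (forall x y, H1 x -> H2 y -> exists p q, alg_center m (twisted m f p q x y)) ->
  exists p q x0 y0 (r : R), 0 < r /\ forall x y,
    `|x - x0| < r -> `|y - y0| < r -> alg_center m (twisted m f p q x y).
Proof.
move=> mlinl mlinr mnorm fcont oH1 [h1 H1h1] oH2 [h2 H2h2] hyp.
have /nbhs_ballP [e1 e1_gt0 ball1] : nbhs h1 H1 by apply: open_nbhs_nbhs.
have /nbhs_ballP [e2 e2_gt0 ball2] : nbhs h2 H2 by apply: open_nbhs_nbhs.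
have e_gt0 : 0 < Num.min e1 e2 by rewrite lt_min e1_gt0 e2_gt0.
pose E (pq : nat * nat) :=
  [set xy : B * B | alg_center m (twisted m f pq.1 pq.2 xy.1 xy.2)].
have cE pq : closed (E pq).
  apply: (closed_central mlinl mlinr mnorm).
  exact: (continuous_twisted mlinl mlinr mnorm (p := pq.1) (q := pq.2) fcont).
have cover : ball (h1, h2) (Num.min e1 e2) `<=` \bigcup_pq E pq.
  move=> [x y] [/= bx by_].
  have H1x : H1 x by apply: ball1; apply: le_ball bx; rewrite ge_min lexx.
  have H2y : H2 y by apply: ball2; apply: le_ball by_; rewrite ge_min lexx orbT.
  by have [p [q central_pq]] := hyp x y H1x H2y; exists (p, q).
have [[p q] [[x0 y0] [r [r0 ballE]]]] :=
  baire_cover (ball_open _ _) (ex_intro _ _ (ballxx _ e_gt0)) cE cover.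
exists p, q, x0, y0, r; split=> // x y x_near y_near; have [] // := ballE (x, y).
by split; rewrite -ball_normE /= distrC.
Qed.

Unset Implicit Arguments.

Theorem theorem2p3 (R : realType) (B : completeNormedModType R)
    (mul : B -> B -> B) (H1 H2 : set B) (f : B -> B) :
  banach_algebra_mul mul ->
  prime_alg mul ->
  open H1 -> H1 !=set0 -> open H2 -> H2 !=set0 ->
  automorphism mul f -> continuous f ->
  (forall x y, H1 x -> H2 y ->
     exists p q : nat, [/\ (0 < p)%N, (0 < q)%N &
       alg_center mul (f (jordan mul (bpow mul x p) (bpow mul y q))
                   + lie_comm mul (bpow mul x p) (bpow mul y q))]) ->
  commutative_alg mul.
Proof.
move=> [massoc mlinl mlinr mnorm] mprime oH1 H1_0 oH2 H2_0 faut fcont hyp.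
have fD : {morph f : x y / x + y} by case: faut.
have hyp_twisted x y : H1 x -> H2 y ->
    exists p q, alg_center mul (twisted mul f p q x y).
  move=> H1x H2y; have [p [q [p0 q0 central_pq]]] := hyp x y H1x H2y.
  by exists p.-1, q.-1; rewrite /twisted !prednK.
have [p [q [x0 [y0 [r [r0 central_near]]]]]] :=
  twisted_central_on_ball mlinl mlinr mnorm fcont oH1 H1_0 oH2 H2_0 hyp_twisted.
have central_all := central_of_central_near mlinl mlinr r0
  (fun x y => hpoly_twisted mlinl mlinr p q fD (hpoly_line _ _) (hpoly_line _ _))
  central_near.
apply: (commutative_of_central_bpow massoc mlinl mlinr mprime (k := (p + q)%N)) => x.
apply: (central_of_double mlinl mlinr); apply: (central_of_automorphism faut).
by rewrite -(twisted_diag massoc); apply: central_all.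
Qed.
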